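(* Let $P$ be a finite set of points in the plane in general position with $|P|$ even, and let $A\subseteq P$ be the union of the vertex sets of some connected components of the underlying graph of $P$. If $a,b\in A$ and the line through $a$ and $b$ is a halving line of $P$, then the two open half-planes determined by this line contain equally many points of $A$.
   Context: Points are in general position if no three are collinear. For a finite set $P$ of $n$ points in general position with $n$ even, a halving line of $P$ is a line through two points of $P$ that has exactly $(n-2)/2$ points of $P$ strictly on each side. The underlying graph of $P$ has vertex set $P$, and two points are adjacent if and only if the line through them is a halving line of $P$. *)

From HB Require Import structures.
From mathcomp Require Import all_boot all_order all_algebra.
Set Implicit Arguments. Unset Strict Implicit. Unset Printing Implicit Defensive.
Import Order.TTheory GRing.Theory Num.Theory.
Local Open Scope ring_scope.

(* A planar point configuration: a finite index type T with an injective
   map pt : T -> R * R; the point set P is the image of pt. *)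

(* Orientation determinant: > 0 iff c lies strictly to the left of the
   directed line a -> b, < 0 iff strictly to the right, = 0 iff collinear. *)
Definition orient (R : numDomainType) (a b c : R * R) : R :=
  (b.1 - a.1) * (c.2 - a.2) - (b.2 - a.2) * (c.1 - a.1).

Definition general_position (R : numDomainType) (T : finType) (pt : T -> R * R) :=
  forall x y z : T, x != y -> y != z -> x != z -> orient (pt x) (pt y) (pt z) != 0.

Definition left_of (R : numDomainType) (T : finType) (pt : T -> R * R)
  (S : {set T}) (x y : T) : {set T} :=
  [set z in S | 0 < orient (pt x) (pt y) (pt z)].
Definition right_of (R : numDomainType) (T : finType) (pt : T -> R * R)
  (S : {set T}) (x y : T) : {set T} :=
  [set z in S | orient (pt x) (pt y) (pt z) < 0].

Definition halving (R : numDomainType) (T : finType) (pt : T -> R * R) (x y : T) : bool :=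
  (x != y) &&
  (#|left_of pt setT x y| == (#|T| - 2) %/ 2)%N &&
  (#|right_of pt setT x y| == (#|T| - 2) %/ 2)%N.

Definition halving_graph (R : numDomainType) (T : finType) (pt : T -> R * R) : rel T :=
  fun x y => halving pt x y.

From HB Require Import structures.
From mathcomp Require Import all_boot all_order all_algebra.
From mathcomp Require Import ring lra zify.
Import Order.TTheory GRing.Theory Num.Theory.
Local Open Scope ring_scope.
Set Implicit Arguments. Unset Strict Implicit. Unset Printing Implicit Defensive.

(* Proof: a rotating-direction argument.  For a height function g on the
   points, the level count of A is the number of points of A among the m + 1
   highest points.
   - Level counts (section LevelCount): if an injective g only breaks the ties
     of a height gc that has no triple ties and whose ties at level m are
     A-homogeneous, the level count of g depends only on gc.
   - Homotopies (section Interpolation): along a straight-line homotopy of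
     height functions whose members all satisfy these hypotheses, the level
     count is constant between generic times; induction on the number of
     pairs whose order is reversed.
   - Geometry (sections Vectors and PointSet): for the height in a nonzero
     direction, general position excludes triple ties, and two tied points at
     level m span a halving line, so A contains both or neither.  A generic
     height refining the height over ab has level count |left(ab) & A| + 1.
   - The theorem: perturb the height over ab generically and rotate it by a
     half-turn into the perturbed height over ba; the invariance of the level
     count gives |left(ab) & A| + 1 = |right(ab) & A| + 1. *)

Section LevelCount.
Variables (R : realFieldType) (T : finType).
Implicit Types (g gc : T -> R) (m : nat) (A : {set T}).

Definition above g z : {set T} := [set y | g z < g y].

(* The points with at most m points strictly higher; for an injective g these
   are the m + 1 highest points. *)
Definition top_set g m : {set T} := [set z | #|above g z| <= m]%N.

Definition level_count g m A : nat := #|top_set g m :&: A|.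

(* g refines gc: it respects every strict comparison made by gc, so it only
   breaks the ties of gc. *)
Definition refines g gc : Prop := forall x y, gc x < gc y -> g x < g y.

Definition no_triple_ties gc : Prop :=
  forall x y z, x != y -> y != z -> x != z -> gc x = gc y -> gc y = gc z -> False.

Definition level_homogeneous gc m A : Prop :=
  forall x y, x != y -> gc x = gc y -> #|above gc x| = m -> (x \in A) = (y \in A).

Lemma card_above_lt g z w : (#|above g z| < #|above g w|)%N = (g w < g z).
Proof.
case: (ltP (g w) (g z)) => [lt_wz | le_zw].
- apply: proper_card; apply/properP; split.
  + by apply/subsetP => y; rewrite !inE; apply: lt_trans.
  + by exists z; rewrite !inE ?lt_wz ?ltxx.
- apply/negbTE; rewrite -leqNgt; apply: subset_leq_card.
  by apply/subsetP => y; rewrite !inE; apply: le_lt_trans.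
Qed.

Lemma card_above_inj g z w : #|above g z| = #|above g w| -> g z = g w.
Proof.
by move=> E; apply/eqP; rewrite eq_le !leNgt -!card_above_lt E ltnn.
Qed.

Lemma above_tied g y z : g y = g z -> above g y = above g z.
Proof. by move=> E; apply/setP => w; rewrite !inE E. Qed.

(* When x and y form a tie class, the other points split into those below
   and those above, so the points below x number #|T| - #|above g x| - 2. *)
Lemma card_below g x y :
  no_triple_ties g -> x != y -> g x = g y ->
  (#|[set z | (g z < g x)%R]| + #|above g x| + 2)%N = #|T|.
Proof.
move=> ties nxy Exy.
have E : [set z | g z < g x] = ~: (above g x :|: [set x; y]).
  apply/setP => z; rewrite !inE !negb_or.
  case: (eqVneq z x) => [-> | nzx]; first by rewrite ltxx.
  case: (eqVneq z y) => [-> | nzy]; first by rewrite Exy ltxx.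
  rewrite /= andbT; case: (ltgtP (g z) (g x)) => // Ezx.
  by case: (ties z x y); rewrite // eq_sym.
have D : above g x :&: [set x; y] = set0.
  apply/setP => z; rewrite !inE; case: (eqVneq z x) => [-> | _]; first by rewrite ltxx.
  by case: (eqVneq z y) => [-> | _]; rewrite ?Exy ?ltxx ?andbF.
rewrite E -(cardsC (above g x :|: [set x; y])) cardsU D cards0 subn0 cards2 nxy.
lia.
Qed.

Section Refinement.
Variables (g gc : T -> R) (m : nat) (A : {set T}).
Hypotheses (g_inj : injective g) (g_refines : refines g gc).
Hypotheses (gc_ties : no_triple_ties gc) (gc_hom : level_homogeneous gc m A).

(* The points tied with z under gc that g puts above z. *)
Let tie_breaks z : {set T} := above g z :\: above gc z.

Lemma above_refines z : above gc z \subset above g z.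
Proof. by apply/subsetP => y; rewrite !inE; apply: g_refines. Qed.

Lemma tie_breaksP z y : y \in tie_breaks z -> gc y = gc z /\ y != z.
Proof.
rewrite !inE -leNgt => /andP[le_yz lt_zy]; split.
- apply/eqP; rewrite eq_le le_yz leNgt; apply/negP => /g_refines.
  by rewrite ltNge (ltW lt_zy).
- by apply: contraTneq lt_zy => ->; rewrite ltxx.
Qed.

(* Since gc has no triple ties, each point has at most one tie partner. *)
Lemma card_tie_breaks z : (#|tie_breaks z| <= 1)%N.
Proof.
rewrite leqNgt; apply/card_gt1P => -[y [y' [hy hy' nyy']]].
have [ey nyz] := tie_breaksP hy; have [ey' ny'z] := tie_breaksP hy'.
by apply: (gc_ties nyz (y := z) (z := y')); rewrite // eq_sym.
Qed.

Lemma in_top_set z : (z \in top_set g m) =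
  (#|above gc z| < m)%N || (#|above gc z| == m) && (tie_breaks z == set0).
Proof.
rewrite inE -(setIidPr (above_refines z)) -(cardsID (above gc z)) -/(tie_breaks z).
rewrite -cards_eq0; have := card_tie_breaks z; lia.
Qed.

Let level_set : {set T} := [set z | #|above gc z| == m].

Lemma level_set_tied z w : z \in level_set -> w \in level_set -> gc z = gc w.
Proof. by rewrite !inE => /eqP Ez /eqP Ew; apply: card_above_inj; rewrite Ez Ew. Qed.

(* If some point has level m, exactly one point of level m is among the m + 1
   highest points for g: the g-highest one. *)
Lemma level_set_top : level_set != set0 ->
  exists2 z0, z0 \in level_set & top_set g m :&: level_set = [set z0].
Proof.
case/set0Pn => z1 Lz1.
have [z0 Lz0 z0_max] := arg_maxP g Lz1; have {}Lz0 : z0 \in level_set := Lz0.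
exists z0 => //; apply/setP => z; rewrite in_setI in_top_set in_set1.
case: (boolP (z \in level_set)) => [Lz | Lz]; last first.
  by rewrite andbF; apply/esym/negbTE; apply: contraNneq Lz => ->.
rewrite andbT; move: (Lz); rewrite inE => /eqP ->; rewrite ltnn eqxx /=.
case: (eqVneq z z0) => [-> | nzz0].
- apply/eqP/setP => y; rewrite in_set0; apply/negP => ty.
  have [ey _] := tie_breaksP ty.
  have Ly : y \in level_set by move: Lz0; rewrite !inE (above_tied ey).
  have : g y <= g z0 := z0_max y Ly.
  by rewrite leNgt; move: ty; rewrite !inE => /andP[_ ->].
- apply/negbTE/set0Pn; exists z0; rewrite !inE (level_set_tied Lz Lz0) ltxx /=.
  have : g z <= g z0 := z0_max z Lz.
  by rewrite le_eqVlt => /orP[/eqP/g_inj/eqP | //]; rewrite (negbTE nzz0).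
Qed.

(* The level count of g only depends on gc: the points of level below m, plus
   one point of level m if there is one (all of them lie in A or none does). *)
Lemma level_count_refines : level_count g m A =
  (#|[set z in A | #|above gc z| < m]| + [exists z in A, #|above gc z| == m])%N.
Proof.
rewrite /level_count -(cardsID level_set) addnC; congr (_ + _)%N.
  apply: eq_card => z; rewrite in_setD in_setI in_top_set !inE.
  by case: ltngtP; rewrite ?andbF ?andbT.
rewrite setIAC; case: (eqVneq level_set set0) => [L0 | /level_set_top [z0 Lz0 ->]].
  have -> : [exists z in A, #|above gc z| == m] = false.
    apply/existsP => -[z /andP[_ Lz]].
    by move: (in_set0 z); rewrite -L0 inE Lz.
  by rewrite L0 setI0 set0I cards0.
have -> : [exists z in A, #|above gc z| == m] = (z0 \in A).
  apply/existsP/idP => [[z /andP[zA Lz]] | z0A]; last first.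
    by exists z0; move: Lz0; rewrite z0A inE.
  have {}Lz : z \in level_set by rewrite inE.
  case: (eqVneq z z0) => [<- // | nzz0].
  by rewrite -(gc_hom nzz0) ?(level_set_tied Lz Lz0) //; apply/eqP; rewrite inE in Lz.
case: (boolP (z0 \in A)) => [z0A | z0nA].
  by rewrite (setIidPl _) ?sub1set // cards1.
suff -> : [set z0] :&: A = set0 by rewrite cards0.
by apply/setP => z; rewrite !inE; apply: contraNF z0nA => /andP[/eqP -> ->].
Qed.

End Refinement.

Lemma level_count_common_coarsening g0 g1 gc m A :
  injective g0 -> injective g1 -> refines g0 gc -> refines g1 gc ->
  no_triple_ties gc -> level_homogeneous gc m A ->
  level_count g0 m A = level_count g1 m A.
Proof.
move=> i0 i1 r0 r1 t h.
by rewrite (level_count_refines i0 r0 t h) (level_count_refines i1 r1 t h).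
Qed.

End LevelCount.

Section Interpolation.
Variables (R : realFieldType) (T : finType) (al be : T -> R).

Definition interp (t : R) (x : T) : R := (1 - t) * al x + t * be x.

(* The time at which the order of x and y under interp is reversed. *)
Definition swap_time (x y : T) : R :=
  (al y - al x) / ((al y - al x) - (be y - be x)).

Lemma interp0 x : interp 0 x = al x.
Proof. by rewrite /interp; ring. Qed.

Lemma interp1 x : interp 1 x = be x.
Proof. by rewrite /interp; ring. Qed.

Lemma interp_gap t x y :
  interp t y - interp t x = (al y - al x) + t * ((be y - be x) - (al y - al x)).
Proof. by rewrite /interp; ring. Qed.

Lemma interp_between t0 t t1 x y : t0 <= t -> t <= t1 ->
  interp t0 x < interp t0 y -> interp t1 x < interp t1 y -> interp t x < interp t y.
Proof.
rewrite -!(subr_gt0 (interp _ x)) !interp_gap.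
set e := al y - al x; set k := be y - be x - e => h0 h1 g0 g1.
case: (lerP 0 k) => hk.
- have : 0 <= (t - t0) * k by apply: mulr_ge0; rewrite // subr_ge0.
  by lra.
- have : 0 <= (t1 - t) * - k by apply: mulr_ge0; rewrite ?subr_ge0 ?oppr_ge0 // ltW.
  by lra.
Qed.

Lemma swap_timeP t0 t1 x y : t0 < t1 ->
  interp t0 x < interp t0 y -> interp t1 y < interp t1 x ->
  forall t, (interp t x < interp t y) = (t < swap_time x y) /\
            (interp t y < interp t x) = (swap_time x y < t).
Proof.
rewrite -[interp t0 x < _]subr_gt0 -[interp t1 y < _]subr_lt0 !interp_gap => lt01 g0 g1 t.
set e := al y - al x; set k := be y - be x - e in g0 g1.
have k_lt0 : k < 0.
  have : (t1 - t0) * k < 0 by lra.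
  by rewrite pmulr_rlt0 // subr_gt0.
have gapE : interp t y - interp t x = - k * (swap_time x y - t).
  have den : al y - al x - (be y - be x) = - k by rewrite /k /e; ring.
  rewrite interp_gap /swap_time den /k /e; field.
  exact: (ltr0_neq0 k_lt0).
rewrite -[interp t x < _]subr_gt0 -[interp t y < _]subr_lt0 gapE.
by rewrite pmulr_rgt0 ?pmulr_rlt0 ?oppr_gt0 // subr_gt0 subr_lt0.
Qed.

Definition swaps (t0 t1 : R) : {set T * T} :=
  [set p | (interp t0 p.1 < interp t0 p.2) && (interp t1 p.2 < interp t1 p.1)].

Lemma swapsP t0 t1 p : t0 < t1 -> p \in swaps t0 t1 ->
  forall t, (interp t p.1 < interp t p.2) = (t < swap_time p.1 p.2) /\
            (interp t p.2 < interp t p.1) = (swap_time p.1 p.2 < t).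
Proof. by move=> lt01; rewrite inE => /andP[]; apply: swap_timeP. Qed.

Lemma swap_time_bounds t0 t1 p : t0 < t1 -> p \in swaps t0 t1 ->
  t0 < swap_time p.1 p.2 < t1.
Proof.
move=> lt01 Sp; have [h0 _] := swapsP lt01 Sp t0; have [_ h1] := swapsP lt01 Sp t1.
by move: Sp; rewrite inE h0 h1.
Qed.

Lemma swap_time_tie t0 t1 p : t0 < t1 -> p \in swaps t0 t1 ->
  interp (swap_time p.1 p.2) p.1 = interp (swap_time p.1 p.2) p.2.
Proof.
move=> lt01 Sp; have [h1 h2] := swapsP lt01 Sp (swap_time p.1 p.2).
by apply/eqP; rewrite eq_le !leNgt h1 h2 ltxx.
Qed.

Lemma ordered_or_swapped t0 t1 x y : injective (interp t1) ->
  interp t0 x < interp t0 y -> interp t1 x < interp t1 y \/ (x, y) \in swaps t0 t1.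
Proof.
move=> inj1 lt0; case: (ltgtP (interp t1 x) (interp t1 y)) => [lt1 | gt1 | /inj1 exy].
- by left.
- by right; rewrite inE lt0 gt1.
- by move: lt0; rewrite exy ltxx.
Qed.

Section Window.
Variables (t0 t1 : R).
Hypotheses (lt01 : t0 < t1) (inj0 : injective (interp t0)) (inj1 : injective (interp t1)).

Lemma refines_single_swap_time c :
  t0 <= c <= t1 -> (forall p, p \in swaps t0 t1 -> swap_time p.1 p.2 = c) ->
  refines (interp t0) (interp c) /\ refines (interp t1) (interp c).
Proof.
case/andP=> le0c lec1 same.
have tie_at_c x y : (x, y) \in swaps t0 t1 -> interp c x = interp c y.
  by move=> Sxy; rewrite -(same _ Sxy); apply: (swap_time_tie lt01 Sxy).
split=> x y ltc; rewrite ltNge le_eqVlt negb_or.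
- apply/andP; split; first by apply: contraTneq ltc => /inj0 ->; rewrite ltxx.
  apply/negP => lt0; case: (ordered_or_swapped inj1 lt0) => [lt1 | /tie_at_c E].
  + by move: (interp_between le0c lec1 lt0 lt1); rewrite ltNge (ltW ltc).
  + by move: ltc; rewrite E ltxx.
- apply/andP; split; first by apply: contraTneq ltc => /inj1 ->; rewrite ltxx.
  apply/negP => lt1; case: (ltgtP (interp t0 x) (interp t0 y)) => [lt0 | gt0 | /inj0 exy].
  + have /tie_at_c E : (x, y) \in swaps t0 t1 by rewrite inE lt0 lt1.
    by move: ltc; rewrite E ltxx.
  + by move: (interp_between le0c lec1 gt0 lt1); rewrite ltNge (ltW ltc).
  + by move: ltc; rewrite exy ltxx.
Qed.

Lemma interp_inj_inside t : t0 < t < t1 ->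
  (forall p, p \in swaps t0 t1 -> swap_time p.1 p.2 != t) -> injective (interp t).
Proof.
case/andP=> lt0t ltt1 avoid.
have sep x y : interp t0 x < interp t0 y -> interp t x != interp t y.
  move=> lt0; case: (ordered_or_swapped inj1 lt0) => [lt1 | Sxy].
    by rewrite lt_eqF // (interp_between (ltW lt0t) (ltW ltt1) lt0 lt1).
  have [h1 h2] := swapsP lt01 Sxy t; rewrite /= in h1 h2.
  have := avoid _ Sxy; rewrite /= neq_lt => /orP[lt_st | lt_ts].
  - by rewrite gt_eqF // h2.
  - by rewrite lt_eqF // h1.
move=> x y E; case: (ltgtP (interp t0 x) (interp t0 y)) => [lt0 | gt0 | /inj0 //].
- by move: (sep _ _ lt0); rewrite E eqxx.
- by move: (sep _ _ gt0); rewrite E eqxx.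
Qed.

Lemma swaps_sub_window t : t0 < t < t1 ->
  swaps t0 t \subset swaps t0 t1 /\ swaps t t1 \subset swaps t0 t1.
Proof.
case/andP=> lt0t ltt1; split; apply/subsetP => -[x y]; rewrite !inE /= => /andP[lt gt].
- rewrite lt /=; case: (ordered_or_swapped inj1 lt) => [lt1 | ].
    by move: (interp_between (ltW lt0t) (ltW ltt1) lt lt1); rewrite ltNge (ltW gt).
  by rewrite inE => /andP[].
- rewrite gt andbT; case: (ltgtP (interp t0 x) (interp t0 y)) => [// | gt0 | /inj0 exy].
  + by move: (interp_between (ltW lt0t) (ltW ltt1) gt0 gt); rewrite ltNge (ltW lt).
  + by move: lt; rewrite exy ltxx.
Qed.

Lemma swaps_single_or_split :
  (exists2 c, t0 <= c <= t1 & forall p, p \in swaps t0 t1 -> swap_time p.1 p.2 = c) \/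
  (exists t, [/\ t0 < t < t1, injective (interp t),
     (#|swaps t0 t| < #|swaps t0 t1|)%N & (#|swaps t t1| < #|swaps t0 t1|)%N]).
Proof.
pose tau (p : T * T) := swap_time p.1 p.2.
case: (set_0Vmem (swaps t0 t1)) => [S0 | [p0 Sp0]].
  by left; exists t0; rewrite ?lexx ?ltW // S0 => p; rewrite inE.
have [ps Sps ps_min] := arg_minP tau Sp0.
have /andP[lt0s lts1] := swap_time_bounds lt01 Sps.
case: (pickP [pred p | (p \in swaps t0 t1) && (tau ps < tau p)]) => [p1 Lp1 | none_later].
- right; have [p2 /andP[Sp2 lt_s2] p2_min] := arg_minP tau Lp1.
  have /andP[_ lt21] := swap_time_bounds lt01 Sp2.
  pose t := (tau ps + tau p2) / 2.
  have [lt_st lt_t2] : tau ps < t /\ t < tau p2 by split; rewrite /t; lra.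
  have avoid p : p \in swaps t0 t1 -> tau p != t.
    move=> Sp; have : tau ps <= tau p := ps_min p Sp.
    rewrite le_eqVlt => /orP[/eqP <- | lt_sp]; first by rewrite lt_eqF.
    have : tau p2 <= tau p by apply: p2_min; rewrite /= Sp lt_sp.
    by move=> le2p; rewrite gt_eqF // (lt_le_trans lt_t2 le2p).
  have lt0t : t0 < t < t1 by rewrite (lt_trans lt0s lt_st) (lt_trans lt_t2 lt21).
  have [sub0 sub1] := swaps_sub_window lt0t.
  exists t; split=> //; first exact: interp_inj_inside.
  + apply: proper_card; apply/properP; split=> //; exists p2 => //.
    have [_ E] := swapsP lt01 Sp2 t.
    by rewrite inE negb_and E -/(tau p2) (lt_gtF lt_t2) orbT.
  + apply: proper_card; apply/properP; split=> //; exists ps => //.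
    have [E _] := swapsP lt01 Sps t.
    by rewrite inE negb_and E -/(tau ps) (lt_gtF lt_st).
- left; exists (tau ps); first by rewrite !ltW.
  move=> p Sp; apply/eqP; rewrite eq_le ps_min // andbT leNgt.
  by have := none_later p; rewrite /= Sp /= => ->.
Qed.

End Window.

Section Invariance.
Variables (m : nat) (A : {set T}).
Hypotheses (ties : forall t, no_triple_ties (interp t)).
Hypotheses (hom : forall t, level_homogeneous (interp t) m A).

(* The level count does not change along the homotopy between generic times:
   induction on the number of reversals, using the coarsening lemma when all
   reversals are simultaneous. *)
Lemma level_count_interp t0 t1 : t0 < t1 ->
  injective (interp t0) -> injective (interp t1) ->
  level_count (interp t0) m A = level_count (interp t1) m A.
Proof.
have [N] := ubnP #|swaps t0 t1|; elim: N t0 t1 => // N IH t0 t1 hN lt01 inj0 inj1.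
case: (swaps_single_or_split lt01 inj0 inj1) =>
  [[c hc same] | [t [/andP[lt0t ltt1] injt h0 h1]]].
- have [r0 r1] := refines_single_swap_time lt01 inj0 inj1 hc same.
  exact: level_count_common_coarsening inj0 inj1 r0 r1 (@ties c) (@hom c).
- rewrite (IH t0 t) ?(IH t t1) //.
  + exact: leq_trans h1 _.
  + exact: leq_trans h0 _.
Qed.

End Invariance.
End Interpolation.

Section Vectors.
Variable R : realFieldType.
Implicit Types (u v p q : R * R) (c d : R).

(* The cross product of u and p; as a function of p it measures the height of
   p in the direction normal to u. *)
Definition cross u p : R := u.1 * p.2 - u.2 * p.1.

Definition perp u : R * R := (- u.2, u.1).

Definition vec p q : R * R := (q.1 - p.1, q.2 - p.2).

Definition lincomb c u d v : R * R := (c * u.1 + d * v.1, c * u.2 + d * v.2).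

Lemma orient_cross p q r : orient p q r = cross (vec p q) r - cross (vec p q) p.
Proof. by rewrite /orient /cross /vec /=; ring. Qed.

Lemma cross_vec u p q : cross u (vec p q) = cross u q - cross u p.
Proof. by rewrite /cross /vec /=; ring. Qed.

Lemma cross_vecC p q r : cross (vec q p) r = - cross (vec p q) r.
Proof. by rewrite /cross /vec /=; ring. Qed.

Lemma cross_lincomb c u d v p : cross (lincomb c u d v) p = c * cross u p + d * cross v p.
Proof. by rewrite /cross /lincomb /=; ring. Qed.

Lemma vec_neq0 p q : p != q -> vec p q != (0, 0).
Proof.
case: p q => [p1 p2] [q1 q2]; rewrite /vec /= !xpair_eqE !subr_eq0.
by apply: contraNN => /andP[/eqP -> /eqP ->]; rewrite !eqxx.
Qed.

Lemma norm2_gt0 u : u != (0, 0) -> 0 < u.1 ^+ 2 + u.2 ^+ 2.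
Proof.
case: u => u1 u2; rewrite xpair_eqE negb_and /= => /orP[] nz.
- by apply: ltr_wpDr; [exact: sqr_ge0 | rewrite exprn_even_gt0].
- by apply: ltr_wpDl; [exact: sqr_ge0 | rewrite exprn_even_gt0].
Qed.

Lemma parallel_scale u v : u != (0, 0) -> cross u v = 0 ->
  exists k, v = (k * u.1, k * u.2).
Proof.
case: u v => [u1 u2] [v1 v2]; rewrite /cross xpair_eqE negb_and /= => nz E.
case: (eqVneq u1 0) => [u1_0 | u1_nz].
- have u2_nz : u2 != 0 by move: nz; rewrite u1_0 eqxx.
  have v1_0 : v1 = 0.
    by apply/eqP; move/eqP: E; rewrite u1_0 mul0r sub0r oppr_eq0 mulf_eq0 (negbTE u2_nz).
  by exists (v2 / u2); rewrite u1_0 v1_0 mulr0 divfK.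
- exists (v1 / u1); rewrite divfK //; congr (_, _); apply: (mulfI u1_nz).
  have -> : u1 * (v1 / u1 * u2) = u2 * v1 by field.
  by apply/eqP; rewrite -subr_eq0 E.
Qed.

Lemma coords_from_cross u p :
  p.1 * (u.1 ^+ 2 + u.2 ^+ 2) = - (u.1 * cross (perp u) p + u.2 * cross u p) /\
  p.2 * (u.1 ^+ 2 + u.2 ^+ 2) = u.1 * cross u p - u.2 * cross (perp u) p.
Proof. by rewrite /cross /perp /=; split; ring. Qed.

Lemma cross_perp_inj u p q : u != (0, 0) ->
  cross u p = cross u q -> cross (perp u) p = cross (perp u) q -> p = q.
Proof.
move=> /norm2_gt0 /lt0r_neq0 nu E1 E2.
have [p1 p2] := coords_from_cross u p; have [q1 q2] := coords_from_cross u q.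
case: p q E1 E2 p1 p2 q1 q2 => [p1 p2] [q1 q2] /= E1 E2 P1 P2 Q1 Q2.
by congr (_, _); apply: (mulIf nu); rewrite ?P1 ?Q1 ?P2 ?Q2 E1 E2.
Qed.

Lemma lincomb_perp_neq0 c d u : u != (0, 0) -> d != 0 -> lincomb c u d (perp u) != (0, 0).
Proof.
move=> /norm2_gt0 nu d_nz; apply/negP => /eqP E.
have : 0 < (c ^+ 2 + d ^+ 2) * (u.1 ^+ 2 + u.2 ^+ 2).
  by apply: mulr_gt0 nu; apply: ltr_wpDl; rewrite ?sqr_ge0 ?exprn_even_gt0.
have -> : (c ^+ 2 + d ^+ 2) * (u.1 ^+ 2 + u.2 ^+ 2) =
          (lincomb c u d (perp u)).1 ^+ 2 + (lincomb c u d (perp u)).2 ^+ 2.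
  by rewrite /lincomb /perp /=; ring.
by rewrite E /= expr0n addr0 ltxx.
Qed.

End Vectors.

Section Perturbation.
Variables (R : realFieldType) (T : finType) (f h : T -> R).

Lemma small_perturbation : exists2 eps : R, 0 < eps &
  forall x y, f x != f y -> eps * `|h y - h x| < `|f y - f x|.
Proof.
pose ratio (p : T * T) := `|f p.2 - f p.1| / (`|h p.2 - h p.1| + 1).
have den_gt0 p : 0 < `|h p.2 - h p.1| + 1 by apply: ltr_wpDl.
have ratioK p : ratio p * (`|h p.2 - h p.1| + 1) = `|f p.2 - f p.1|.
  by rewrite /ratio divfK // gt_eqF.
have ratio_gt0 p : f p.1 != f p.2 -> 0 < ratio p.
  by move=> nf; rewrite divr_gt0 // normr_gt0 subr_eq0 eq_sym.
case: (pickP (fun p : T * T => f p.1 != f p.2)) => [p0 Hp0 | none]; last first.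
  by exists 1 => // x y nf; move: (none (x, y)); rewrite /= nf.
have [pm Hpm pm_min] := arg_minP (P := fun p : T * T => f p.1 != f p.2) ratio Hp0.
exists (ratio pm); first exact: ratio_gt0.
move=> x y nf; have le_r : ratio pm <= ratio (x, y) := pm_min (x, y) nf.
rewrite -(ratioK (x, y)) /= mulrDr mulr1.
have := ratio_gt0 (x, y) nf; have : 0 <= `|h y - h x| := normr_ge0 _.
by nra.
Qed.

Lemma perturbation : injective (fun x => (f x, h x)) -> exists2 eps : R, 0 < eps &
  forall s, `|s| = 1 -> injective (fun x => s * f x + eps * h x) /\
                        refines (fun x => s * f x + eps * h x) (fun x => s * f x).
Proof.
move=> fh_inj; have [eps eps_gt0 small] := small_perturbation.
exists eps => // s s1.
have gap x y : (s * f y + eps * h y) - (s * f x + eps * h x) =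
               s * (f y - f x) + eps * (h y - h x) by ring.
have dominant x y : f x != f y -> `|eps * (h y - h x)| < `|s * (f y - f x)|.
  by move=> nf; rewrite !normrM s1 mul1r (gtr0_norm eps_gt0); apply: small.
split.
- move=> x y /eqP; rewrite -subr_eq0 -oppr_eq0 opprB gap => /eqP E.
  have Ef : f x = f y.
    apply/eqP; apply/negP => /negP /dominant.
    by rewrite (_ : s * _ = - (eps * (h y - h x))) ?normrN ?ltxx // -[LHS]subr0 -E; ring.
  apply: fh_inj; congr (_, _) => //.
  move: E; rewrite Ef subrr mulr0 add0r => /eqP; rewrite mulf_eq0 gt_eqF //= subr_eq0.
  by move/eqP.
- move=> x y lt; rewrite -subr_gt0 gap.
  have nf : f x != f y by apply: contraTneq lt => ->; rewrite ltxx.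
  have pos : 0 < s * (f y - f x) by rewrite mulrBr subr_gt0.
  have := dominant x y nf; rewrite (gtr0_norm pos) => dom.
  have le := ler_norm (- (eps * (h y - h x))); rewrite normrN in le.
  by lra.
Qed.

End Perturbation.

Section PointSet.
Variables (R : realFieldType) (T : finType) (pt : T -> R * R).
Hypotheses (pt_inj : injective pt) (gp : general_position pt).

Lemma pt_vec_neq0 x y : x != y -> vec (pt x) (pt y) != (0, 0).
Proof. by move=> nxy; apply: vec_neq0; apply: contra nxy => /eqP/pt_inj ->. Qed.

Lemma left_of_swap S x y : left_of pt S y x = right_of pt S x y.
Proof.
apply/setP => z; rewrite !inE -oppr_gt0.
suff -> : orient (pt y) (pt x) (pt z) = - orient (pt x) (pt y) (pt z) by [].
by rewrite /orient; ring.
Qed.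

Lemma halving_sym x y : halving pt x y = halving pt y x.
Proof.
by rewrite /halving eq_sym (left_of_swap setT x y) -(left_of_swap setT y x) andbAC.
Qed.

Lemma tie_orient u x y : u != (0, 0) -> x != y -> cross u (pt x) = cross u (pt y) ->
  exists2 k, k != 0 &
    forall z, orient (pt x) (pt y) (pt z) = k * (cross u (pt z) - cross u (pt x)).
Proof.
move=> nu nxy E.
have [k vk] : exists k, vec (pt x) (pt y) = (k * u.1, k * u.2).
  by apply: parallel_scale nu _; rewrite cross_vec E subrr.
exists k => [|z]; last by rewrite orient_cross vk /cross /=; ring.
by apply: contraNneq (pt_vec_neq0 nxy) => k0; rewrite vk k0 !mul0r.
Qed.

Lemma cross_no_triple_ties g u : u != (0, 0) ->
  (forall z, g z = cross u (pt z)) -> no_triple_ties g.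
Proof.
move=> nu gE x y z nxy nyz nxz; rewrite !gE => Exy Eyz.
have [k _ hk] := tie_orient nu nxy Exy.
by move: (gp nxy nyz nxz); rewrite hk -Eyz -Exy subrr mulr0 eqxx.
Qed.

(* The sweep: tilt the height over the line ab slightly towards perp(ab) and
   rotate its direction by a half-turn. *)
Lemma halving_sweep a b : a != b -> exists al be : T -> R,
  [/\ forall t, exists2 v : R * R, v != (0, 0) &
                forall z, interp al be t z = cross v (pt z),
      injective (interp al be 0),
      refines (interp al be 0) (fun z => cross (vec (pt a) (pt b)) (pt z)),
      injective (interp al be 1) &
      refines (interp al be 1) (fun z => cross (vec (pt b) (pt a)) (pt z))].
Proof.
move=> nab; set u := vec (pt a) (pt b).
pose f z := cross u (pt z); pose h z := cross (perp u) (pt z).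
have nu : u != (0, 0) := pt_vec_neq0 nab.
have fh_inj : injective (fun z => (f z, h z)).
  by move=> x y [Ef Eh]; apply: pt_inj; apply: cross_perp_inj nu Ef Eh.
have [eps eps_gt0 pert] := perturbation fh_inj.
have [inj_al ref_al] := pert 1 (normr1 _).
have [inj_be ref_be] := pert (-1) (etrans (normrN 1) (normr1 _)).
exists (fun z => 1 * f z + eps * h z), (fun z => -1 * f z + eps * h z); split.
- move=> t; exists (lincomb (1 - 2 * t) u eps (perp u)).
    exact: lincomb_perp_neq0 nu (lt0r_neq0 eps_gt0).
  by move=> z; rewrite /interp cross_lincomb /f /h; ring.
- by move=> x y; rewrite !interp0; apply: inj_al.
- by move=> x y lt; rewrite !interp0; apply: ref_al; rewrite !mul1r.
- by move=> x y; rewrite !interp1; apply: inj_be.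
- by move=> x y lt; rewrite !interp1; apply: ref_be; rewrite !mulN1r -!cross_vecC.
Qed.

Section HalvingLines.
Variables (m : nat) (A : {set T}).
Hypothesis card_T : #|T| = (m + m + 2)%N.
Hypothesis A_closed : forall x y, connect (halving_graph pt) x y -> x \in A -> y \in A.

(* Two points tied at level m for a height in a nonzero direction span a
   halving line: m points lie above them and, by counting, m below. *)
Lemma tie_halving g u x y : u != (0, 0) -> (forall z, g z = cross u (pt z)) ->
  x != y -> g x = g y -> #|above g x| = m -> halving pt x y.
Proof.
move=> nu gE nxy Exy Kx.
have [k k_nz hk] := tie_orient nu nxy (etrans (esym (gE x)) (etrans Exy (gE y))).
have side z : orient (pt x) (pt y) (pt z) = k * (g z - g x) by rewrite hk !gE.
have Kb : #|[set z | g z < g x]| = m.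
  by have := card_below (cross_no_triple_ties nu gE) nxy Exy; rewrite Kx card_T; lia.
have half : ((#|T| - 2) %/ 2)%N = m by rewrite card_T; lia.
rewrite /halving nxy half /=.
case: (ltgtP k 0) k_nz => [k_lt0 _ | k_gt0 _ | //].
- have -> : left_of pt setT x y = [set z | g z < g x].
    by apply/setP => z; rewrite !inE side nmulr_rgt0 // subr_lt0.
  have -> : right_of pt setT x y = above g x.
    by apply/setP => z; rewrite !inE side nmulr_rlt0 // subr_gt0.
  by rewrite Kb Kx !eqxx.
- have -> : left_of pt setT x y = above g x.
    by apply/setP => z; rewrite !inE side pmulr_rgt0 // subr_gt0.
  have -> : right_of pt setT x y = [set z | g z < g x].
    by apply/setP => z; rewrite !inE side pmulr_rlt0 // subr_lt0.
  by rewrite Kb Kx !eqxx.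
Qed.

(* Since A is closed under halving lines, ties at level m are A-homogeneous. *)
Lemma cross_level_homogeneous g u : u != (0, 0) ->
  (forall z, g z = cross u (pt z)) -> level_homogeneous g m A.
Proof.
move=> nu gE x y nxy Exy Kx.
have hxy : halving pt x y := tie_halving nu gE nxy Exy Kx.
have hyx : halving pt y x by rewrite -halving_sym.
by apply/idP/idP; apply: A_closed; apply: connect1.
Qed.

(* A generic refinement of the height over a halving line ab has as its m + 1
   highest points the m points left of ab and one of a, b. *)
Lemma level_count_halving g a b : injective g ->
  refines g (fun z => cross (vec (pt a) (pt b)) (pt z)) ->
  a != b -> a \in A -> #|left_of pt setT a b| = m ->
  level_count g m A = (#|left_of pt A a b| + 1)%N.
Proof.
set u := vec (pt a) (pt b); set o := fun z => cross u (pt z) => g_inj g_ref nab aA Ka.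
have nu : u != (0, 0) := pt_vec_neq0 nab.
rewrite (level_count_refines g_inj g_ref (cross_no_triple_ties nu (fun=> erefl))
                             (cross_level_homogeneous nu (fun=> erefl))).
have left_above : left_of pt setT a b = above o a.
  by apply/setP => z; rewrite !inE orient_cross subr_gt0.
have level z : (#|above o z| < m)%N = (o a < o z) by rewrite -Ka left_above card_above_lt.
congr (_ + _)%N.
- by apply: eq_card => z; rewrite !inE level orient_cross subr_gt0 andbC.
- by apply/eqP; rewrite eqb1; apply/existsP; exists a; rewrite aA -Ka left_above eqxx.
Qed.

End HalvingLines.
End PointSet.

(* With a halving line, |T| is even and at least 2, so |T| = 2m + 2. *)
Lemma card_of_halving (R : realFieldType) (T : finType) (pt : T -> R * R) a b :
  halving pt a b -> ~~ odd #|T| ->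
  #|T| = ((#|T| - 2) %/ 2 + (#|T| - 2) %/ 2 + 2)%N.
Proof.
case/andP=> /andP[nab _] _ even.
have two : (2 <= #|T|)%N by have := max_card [set a; b]; rewrite cards2 nab.
have := odd_double_half (#|T| - 2); rewrite oddB // (negbTE even) add0n -addnn.
lia.
Qed.

Theorem mainTheorem2 (R : realFieldType) (T : finType) (pt : T -> R * R)
  (pt_inj : injective pt)
  (gp : general_position pt)
  (heven : ~~ odd #|T|)
  (A : {set T})
  (hA : forall x y : T, connect (halving_graph pt) x y -> x \in A -> y \in A)
  (a b : T) (ha : a \in A) (hb : b \in A)
  (hab : halving pt a b) :
  #|left_of pt A a b| = #|right_of pt A a b|.
Proof.
set m := ((#|T| - 2) %/ 2)%N.
have card_T : #|T| = (m + m + 2)%N := card_of_halving hab heven.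
case/andP: (hab) => /andP[nab /eqP left_m] /eqP right_m.
have nba : b != a by rewrite eq_sym.
have [al [be [dir inj0 ref0 inj1 ref1]]] := halving_sweep pt_inj nab.
have ties : forall t, no_triple_ties (interp al be t).
  move=> t; have [v nv hv] := dir t.
  exact (cross_no_triple_ties pt_inj gp nv hv).
have hom : forall t, level_homogeneous (interp al be t) m A.
  move=> t; have [v nv hv] := dir t.
  exact (cross_level_homogeneous pt_inj gp card_T hA nv hv).
have := level_count_interp ties hom ltr01 inj0 inj1.
rewrite (level_count_halving pt_inj gp card_T hA inj0 ref0 nab ha left_m).
rewrite (level_count_halving pt_inj gp card_T hA inj1 ref1 nba hb); last first.
  by rewrite left_of_swap.
by rewrite (left_of_swap pt A a b) => /eqP; rewrite eqn_add2r => /eqP.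
Qed.
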